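(* Let $\mathcal{H}$ be a (possibly infinite-dimensional) complex Hilbert space, let $\hat H_{\mathrm{on}}$ be a Hamiltonian (self-adjoint operator) on $\mathcal{H}$, and let $|\psi_{\mathrm{off}}\rangle,|\psi_{\mathrm{on}}\rangle$ be orthonormal vectors with $r_0:=\langle\psi_{\mathrm{off}}|\hat H_{\mathrm{on}}|\psi_{\mathrm{off}}\rangle\neq 0$. Define $$\hat H=\hat H_{\mathrm{on}}-\hat H_{\mathrm{on}}|\psi_{\mathrm{off}}\rangle\langle\psi_{\mathrm{off}}|\hat H_{\mathrm{on}}/r_0,$$ and $|\psi_{\mathrm{on}}(t)\rangle:=e^{-\mathrm{i}t\hat H_{\mathrm{on}}}|\psi_{\mathrm{on}}\rangle$. Let $L>0$ and suppose $\langle\psi_{\mathrm{off}}|\psi_{\mathrm{on}}(t)\rangle=0$ for all $t\in[0,L]$. Then for all $t\in[0,L]$, $$e^{-\mathrm{i}t\hat H}|\psi_{\mathrm{off}}\rangle=|\psi_{\mathrm{off}}\rangle\qquad\text{and}\qquad e^{-\mathrm{i}t\hat H}|\psi_{\mathrm{on}}\rangle=|\psi_{\mathrm{on}}(t)\rangle.$$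
   Context: In the paper the length of the time interval is $L=x_0T_0$, where $x_0$ is a positive integer and $T_0>0$ is the clock period. *)

(* Unbounded self-adjoint operators are
   given by a domain D and an action H on D; e^{-itH} is characterised as
   the strongly continuous unitary group with generator -iH (Stone). *)
From mathcomp Require Import all_boot all_order all_algebra.
From mathcomp Require Import reals.
From mathcomp Require Import complex.
Set Implicit Arguments. Unset Strict Implicit. Unset Printing Implicit Defensive.
Import Order.TTheory GRing.Theory Num.Theory.
Local Open Scope ring_scope.
Local Open Scope complex_scope.

Section Hilbert.
Variables (R : realType) (V : lmodType R[i]).

(* <x|y>: antilinear in the first, linear in the second argument. *)
Definition inner_product (ip : V -> V -> R[i]) : Prop :=
  [/\ (forall a x y z, ip x (a *: y + z) = a * ip x y + ip x z),
      (forall x y, ip x y = (ip y x)^*),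
      (forall x, 0 <= complex.Re (ip x x) /\ complex.Im (ip x x) = 0)
    & (forall x, ip x x = 0 -> x = 0)].

Definition normv (ip : V -> V -> R[i]) (x : V) : R := Num.sqrt (complex.Re (ip x x)).

Definition seq_cvg ip (u : nat -> V) (l : V) : Prop :=
  forall e : R, 0 < e -> exists N : nat, forall n, (N <= n)%N -> normv ip (u n - l) < e.

Definition seq_cauchy ip (u : nat -> V) : Prop :=
  forall e : R, 0 < e -> exists N : nat, forall m n, (N <= m)%N -> (N <= n)%N ->
    normv ip (u m - u n) < e.

Definition hilbert_space (ip : V -> V -> R[i]) : Prop :=
  inner_product ip /\
  (forall u, seq_cauchy ip u -> exists l, seq_cvg ip u l).

(* (D, H) is a densely defined linear operator on V with domain D,
   and it is self-adjoint: its adjoint (as a relation) equals it. *)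
Definition self_adjoint (ip : V -> V -> R[i]) (D : V -> Prop) (H : V -> V) : Prop :=
  [/\ D 0,
      (forall a x y, D x -> D y -> D (a *: x + y) /\ H (a *: x + y) = a *: H x + H y),
      (forall x (e : R), 0 < e -> exists y, D y /\ normv ip (x - y) < e)
    & (forall y z, (D y /\ H y = z) <-> (forall x, D x -> ip (H x) y = ip x z))].

Definition lim_at (f : R -> R) (t0 l : R) : Prop :=
  forall e : R, 0 < e -> exists2 d : R, 0 < d &
    forall t, t != t0 -> `|t - t0| < d -> `|f t - l| < e.

(* U is the strongly continuous one-parameter unitary group
   t |-> e^{-itH} generated by the self-adjoint operator (D, H):
   its generator (the strong derivative at 0) is -iH with domain exactly D. *)
Definition unitary_group_of (ip : V -> V -> R[i]) (D : V -> Prop) (H : V -> V)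
    (U : R -> V -> V) : Prop :=
  [/\ (forall t a x y, U t (a *: x + y) = a *: U t x + U t y),
      (forall t x y, ip (U t x) (U t y) = ip x y),
      (forall x, U 0 x = x),
      (forall s t x, U (s + t) x = U s (U t x))
    & (forall x t0, lim_at (fun t => normv ip (U t x - U t0 x)) t0 0)] /\
    (forall x y, (D x /\ y = - 'i *: H x) <->
         lim_at (fun h => normv ip (h^-1%:C *: (U h x - x) - y)) 0 0).

End Hilbert.

From mathcomp Require Import all_boot all_order all_algebra.
From mathcomp Require Import boolp classical_sets reals topology normedtype derive.
From mathcomp Require Import complex.
From mathcomp Require Import ring lra.
Set Implicit Arguments. Unset Strict Implicit. Unset Printing Implicit Defensive.
Import Order.TTheory GRing.Theory Num.Theory.
Import numFieldTopology.Exports numFieldNormedType.Exports.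
Local Open Scope ring_scope.
Local Open Scope classical_set_scope.
Local Open Scope complex_scope.

(* Both identities come from "zero derivative on [0, t] implies constant",
   applied to real parts of matrix elements.  Since Hhat psi_off = 0, each
   s |-> <y | Uhat s psi_off> is constant.  For x in the domain, the derivative
   of s |-> <Uhat s x | Uon s psi_on> is i <(Hhat - Hon) a | Uon s psi_on> with
   a = Uhat s x, a multiple of <Hon psi_off | Uon s psi_on>; this vanishes
   because it is, up to a factor, the derivative of the function
   k |-> <psi_off | Uon (s - k) psi_on>, which is zero on [0, L].  Hence
   Uhat (-t) (Uon t psi_on) - psi_on is orthogonal to the dense domain. *)

Section RealAnalysis.
Variable R : realType.

Lemma lim_atE (f : R -> R) (t0 l : R) :
  lim_at f t0 l <-> f t @[t --> t0^'] --> l.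
Proof.
rewrite cvgrPdist_lt; split=> fl e /fl.
- move=> [d d0 fd]; rewrite near_withinE; apply/nbhs_ballP; exists d => // t.
  by rewrite /ball /= distrC => td tt0; rewrite distrC; apply: fd.
- rewrite near_withinE => /nbhs_ballP[d /= d0 fd]; exists d => // t tt0 td.
  by rewrite distrC; apply: fd => //; rewrite /ball /= distrC.
Qed.

Lemma derive0_eq (f : R -> R) (a b : R) : a <= b ->
  (forall s, a <= s <= b -> h^-1 * (f (s + h) - f s) @[h --> 0^'] --> 0) ->
  f b = f a.
Proof.
move=> ab f'0.
have df s : s \in `[a, b]%R -> is_derive s 1 f 0.
  rewrite in_itv /= => /f'0 fs.
  have E : (fun h => h^-1 *: ((f \o shift s) (h *: 1) - f s)) =
            (fun h => h^-1 * (f (s + h) - f s)).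
    by apply/funext => h /=; rewrite [h%:A]mulr1 [h + s]addrC.
  by split; rewrite /derivable /derive E; [exact: cvgP fs | exact: cvg_lim fs].
have fC : {within `[a, b], continuous f}.
  by apply: derivable_within_continuous => s /df [].
have [c _] := MVT_segment ab (fun s sab => df s (subset_itv_oo_cc sab)) fC.
by rewrite mul0r => /eqP; rewrite subr_eq0 => /eqP.
Qed.

Lemma cvg_zeros_eq0 (f : R -> R) (l : R) :
  f h @[h --> 0^'] --> l ->
  (forall d, 0 < d -> exists h, [/\ h != 0, `|h| < d & f h = 0]) -> l = 0.
Proof.
move=> /lim_atE fl zeros; apply/eqP/negPn/negP; rewrite -normr_gt0 => l0.
have [d d0 fd] := fl _ l0; have [h [h0 hd fh0]] := zeros d d0.
by have := fd h h0; rewrite subr0 fh0 sub0r normrN ltxx => /(_ hd).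
Qed.

Lemma small_shift_in_itv (L s d : R) : 0 < L -> 0 <= s <= L -> 0 < d ->
  exists k, [/\ k != 0, `|k| < d & 0 <= s - k <= L].
Proof.
move=> L0 /andP[s0 sL] d0; pose m := Num.min (d / 2) (L / 2).
have m0 : 0 < m by rewrite lt_min !divr_gt0.
have [md mL] : m <= d / 2 /\ m <= L / 2 by rewrite !ge_min !lexx orbT.
have [sL2|sL2] := leP s (L / 2).
- by exists (- m); rewrite oppr_eq0 normrN gtr0_norm ?gt_eqF //; split=> //;
    [lra | apply/andP; split; lra].
- by exists m; rewrite gtr0_norm ?gt_eqF //; split=> //;
    [lra | apply/andP; split; lra].
Qed.

End RealAnalysis.

Section ComplexFacts.
Variable R : realType.
Implicit Types (r : R) (z : R[i]).

Lemma Re_realM r z : complex.Re (r%:C * z) = r * complex.Re z.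
Proof. by case: z => a b /=; rewrite mul0r subr0. Qed.

Lemma conjc_realC r : conjc (r%:C) = r%:C :> R[i].
Proof. by rewrite /= oppr0. Qed.

Lemma Re_conj z : complex.Re (conjc z) = complex.Re z.
Proof. by case: z. Qed.

Lemma complex_eq0 z : complex.Re z = 0 -> complex.Re ('i * z) = 0 -> z = 0.
Proof.
by case: z => a b /= -> /eqP; rewrite mul0r mul1r sub0r oppr_eq0 => /eqP ->.
Qed.

End ComplexFacts.

Section InnerProduct.
Variables (R : realType) (V : lmodType R[i]) (ip : V -> V -> R[i]).
Hypothesis ipP : inner_product ip.

Lemma ipDr x y z : ip x (y + z) = ip x y + ip x z.
Proof. by case: ipP => lin _ _ _; rewrite -[y]scale1r lin mul1r scale1r. Qed.

Lemma ip0r x : ip x 0 = 0.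
Proof. by apply: (@addrI _ (ip x 0)); rewrite -ipDr !addr0. Qed.

Lemma ipZr a x y : ip x (a *: y) = a * ip x y.
Proof. by case: ipP => lin _ _ _; have := lin a x y 0; rewrite !addr0 ip0r addr0. Qed.

Lemma ipBr x y z : ip x (y - z) = ip x y - ip x z.
Proof. by rewrite ipDr -scaleN1r ipZr mulN1r. Qed.

Lemma ipC x y : ip x y = conjc (ip y x).
Proof. by case: ipP. Qed.

Lemma ipDl x y z : ip (x + y) z = ip x z + ip y z.
Proof. by rewrite ipC ipDr rmorphD /= -!ipC. Qed.

Lemma ipZl a x y : ip (a *: x) y = conjc a * ip x y.
Proof. by rewrite ipC ipZr rmorphM /= -ipC. Qed.

Lemma ipBl x y z : ip (x - y) z = ip x z - ip y z.
Proof. by rewrite ipDl -scaleN1r ipZl rmorphN1 mulN1r. Qed.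

Lemma Re_ip_ge0 x : 0 <= complex.Re (ip x x).
Proof. by case: ipP => _ _ /(_ x)[]. Qed.

Lemma normv_ge0 x : 0 <= normv ip x.
Proof. exact: sqrtr_ge0. Qed.

Lemma normv_sqr x : normv ip x ^+ 2 = complex.Re (ip x x).
Proof. by rewrite sqr_sqrtr // Re_ip_ge0. Qed.

Lemma Re_ip_eq0 x : complex.Re (ip x x) = 0 -> x = 0.
Proof.
case: ipP => _ _ /(_ x)[_ Im0] def Re0; apply: def.
by move: Re0 Im0; case: (ip x x) => a b /= -> ->.
Qed.

Lemma Re_ip_le_normv u v : `|complex.Re (ip u v)| <= normv ip u * normv ip v.
Proof.
set A := complex.Re (ip u u); set B := complex.Re (ip u v).
set C := complex.Re (ip v v).
have quad t : 0 <= A + 2 * t * B + t ^+ 2 * C.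
  have := Re_ip_ge0 (u + t%:C *: v).
  rewrite !(ipDl, ipDr, ipZl, ipZr) conjc_realC !raddfD /= !Re_realM.
  by rewrite (ipC v u) Re_conj -/A -/B -/C; lra.
have BAC : B ^+ 2 <= A * C.
  have [C0|C0] := eqVneq C 0.
    have -> : B = 0 by rewrite /B (Re_ip_eq0 C0) ip0r.
    by rewrite expr0n mulr_ge0 ?Re_ip_ge0.
  have Cpos : 0 < C by rewrite lt0r C0 Re_ip_ge0.
  have := quad (- B / C).
  have -> : A + 2 * (- B / C) * B + (- B / C) ^+ 2 * C = (A * C - B ^+ 2) / C.
    by field; rewrite C0.
  by rewrite pmulr_lge0 ?invr_gt0 // subr_ge0.
rewrite -(ger0_norm (mulr_ge0 (normv_ge0 u) (normv_ge0 v))) -ler_sqr ?nnegrE //.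
by rewrite !real_normK ?num_real // exprMn !normv_sqr.
Qed.

Lemma cvg_Re_ip {T} {F : set_system T} {FF : Filter F} (x y : T -> V) (x0 y0 : V) :
  normv ip (x t - x0) @[t --> F] --> 0 -> normv ip (y t - y0) @[t --> F] --> 0 ->
  complex.Re (ip (x t) (y t)) @[t --> F] --> complex.Re (ip x0 y0).
Proof.
move=> xt yt; pose G t := normv ip (x t - x0) * normv ip (y t - y0) +
  normv ip (x t - x0) * normv ip y0 + normv ip x0 * normv ip (y t - y0).
have G0 : G t @[t --> F] --> 0.
  have -> : 0 = 0 * 0 + 0 * normv ip y0 + normv ip x0 * 0 :> R.
    by rewrite !(mul0r, mulr0) !addr0.
  by apply: cvgD; [apply: cvgD; [exact: cvgM | apply: cvgM] | apply: cvgM] => //;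
    try exact: cvg_cst.
apply: (@squeeze_cvgr _ _ _ _ (fun t => complex.Re (ip x0 y0) - G t)
  (fun t => complex.Re (ip x0 y0) + G t)); last 2 first.
- by rewrite -[X in _ --> X]subr0; apply: cvgB => //; exact: cvg_cst.
- by rewrite -[X in _ --> X]addr0; apply: cvgD => //; exact: cvg_cst.
near=> t; rewrite -ler_distlC distrC -raddfB /=.
have -> : ip (x t) (y t) - ip x0 y0 = ip (x t - x0) (y t - y0) + ip (x t - x0) y0 +
    ip x0 (y t - y0) by rewrite !(ipBl, ipBr); ring.
rewrite !raddfD /=; apply: le_trans (ler_normD _ _) _; apply: lerD; last exact: Re_ip_le_normv.
by apply: le_trans (ler_normD _ _) _; apply: lerD; exact: Re_ip_le_normv.
Unshelve. all: by end_near. Qed.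

Lemma normv0 : normv ip 0 = 0.
Proof. by rewrite /normv ip0r sqrtr0. Qed.

Lemma cvg_Re_ipl {T} {F : set_system T} {FF : Filter F} (x : T -> V) (x0 w : V) :
  normv ip (x t - x0) @[t --> F] --> 0 ->
  complex.Re (ip (x t) w) @[t --> F] --> complex.Re (ip x0 w).
Proof. by move=> xt; apply: cvg_Re_ip xt _; rewrite subrr normv0; exact: cvg_cst. Qed.

Lemma cvg_Re_ipr {T} {F : set_system T} {FF : Filter F} (y : T -> V) (w y0 : V) :
  normv ip (y t - y0) @[t --> F] --> 0 ->
  complex.Re (ip w (y t)) @[t --> F] --> complex.Re (ip w y0).
Proof. by apply: cvg_Re_ip; rewrite subrr normv0; exact: cvg_cst. Qed.

Definition dense_in (D : V -> Prop) :=
  forall x (e : R), 0 < e -> exists y, D y /\ normv ip (x - y) < e.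

Lemma dense_Re_ip_eq0 (D : V -> Prop) z : dense_in D ->
  (forall y, D y -> complex.Re (ip y z) = 0) -> z = 0.
Proof.
move=> Ddense zperp; apply: Re_ip_eq0; apply/eqP/negPn/negP => z0.
have nz : 0 < normv ip z by rewrite sqrtr_gt0 lt_neqAle eq_sym z0 Re_ip_ge0.
have [y [Dy yz]] := Ddense z _ nz.
have : normv ip z ^+ 2 < normv ip z ^+ 2.
  rewrite {1}normv_sqr.
  have -> : ip z z = ip (z - y) z + ip y z by rewrite ipBl subrK.
  rewrite raddfD /= (zperp y Dy) addr0.
  apply: le_lt_trans (ler_norm _) _; apply: le_lt_trans (Re_ip_le_normv _ _) _.
  by rewrite expr2 ltr_pM2r.
by rewrite ltxx.
Qed.

End InnerProduct.

Section UnitaryGroup.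
Variables (R : realType) (V : lmodType R[i]) (ip : V -> V -> R[i]).
Variables (D : V -> Prop) (H : V -> V) (U : R -> V -> V).
Hypothesis UG : unitary_group_of ip D H U.

Lemma ugD t x y : U t (x + y) = U t x + U t y.
Proof. by case: UG => -[lin _ _ _ _] _; rewrite -[x]scale1r lin !scale1r. Qed.

Lemma ugZ t a x : U t (a *: x) = a *: U t x.
Proof.
case: UG => -[lin _ _ _ _] _; have U0 : U t 0 = 0.
  by apply: (@addrI _ (U t 0)); rewrite -ugD !addr0.
by have := lin t a x 0; rewrite !addr0 U0 addr0.
Qed.

Lemma ugB t x y : U t (x - y) = U t x - U t y.
Proof. by rewrite ugD -scaleN1r ugZ scaleN1r. Qed.

Lemma ug0 x : U 0 x = x.
Proof. by case: UG => -[]. Qed.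

Lemma ug_add s t x : U (s + t) x = U s (U t x).
Proof. by case: UG => -[]. Qed.

Lemma ug_iso t x y : ip (U t x) (U t y) = ip x y.
Proof. by case: UG => -[]. Qed.

Lemma ug_adj t x y : ip (U t x) y = ip x (U (- t) y).
Proof. by rewrite -(ug_iso t x) -ug_add subrr ug0. Qed.

Lemma normv_ug t x : normv ip (U t x) = normv ip x.
Proof. by rewrite /normv ug_iso. Qed.

Lemma ug_cvg x : normv ip (U h x - x) @[h --> 0^'] --> 0.
Proof. by case: UG => -[_ _ _ _ cont] _; have /lim_atE := cont x 0; rewrite ug0. Qed.

Lemma ug_generator x : D x ->
  normv ip ((h^-1)%:C *: (U h x - x) - - 'i *: H x) @[h --> 0^'] --> 0.
Proof. by case: UG => _ gen Dx; apply/lim_atE/gen. Qed.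

Lemma ug_domain t x : D x -> D (U t x).
Proof.
case: UG => _ gen Dx.
suff [] : D (U t x) /\ U t (- 'i *: H x) = - 'i *: H (U t x) by [].
apply/gen/lim_atE; have /lim_atE := (gen x _).1 (conj Dx erefl).
suff -> : (fun h => normv ip ((h^-1)%:C *: (U h x - x) - - 'i *: H x)) =
  (fun h => normv ip ((h^-1)%:C *: (U h (U t x) - U t x) - U t (- 'i *: H x))) by [].
by apply/funext => h; rewrite -(normv_ug t) !(ugB, ugZ) -!ug_add [t + h]addrC addrC.
Qed.

Hypothesis ipP : inner_product ip.

Lemma ug_fix_kernel x : D x -> H x = 0 -> forall t, U t x = x.
Proof.
move=> Dx Hx0; suff fix_pos t : 0 <= t -> U t x = x.
  move=> t; have [/fix_pos //|t0] := leP 0 t.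
  by rewrite -{1}(fix_pos (- t)) ?oppr_ge0 ?ltW // -ug_add subrr ug0.
move=> t0; apply/eqP; rewrite -subr_eq0; apply/eqP; apply: (Re_ip_eq0 ipP).
set d : V := U t x - x; pose f s := complex.Re (ip d (U s x)).
suff : f t = f 0 by rewrite /f ug0 => E; rewrite {2}/d (ipBr ipP) raddfB /= E subrr.
apply: (derive0_eq t0) => s _.
have -> : (fun h => h^-1 * (f (s + h) - f s)) =
    (fun h => complex.Re (ip (U (- s) d) ((h^-1)%:C *: (U h x - x)))).
  apply/funext => h; rewrite /f -raddfB -(ipBr ipP).
  by rewrite (ipZr ipP) Re_realM ug_adj opprK ugB -ug_add.
rewrite -[X in _ --> X](_ : complex.Re (ip (U (- s) d) (- 'i *: H x)) = 0).
  apply: (cvg_Re_ipr ipP); exact: ug_generator.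
by rewrite (ipZr ipP) Hx0 (ip0r ipP) mulr0.
Qed.

Lemma ug_generator_orth x y L : 0 < L -> D x ->
  (forall s, 0 <= s <= L -> ip x (U s y) = 0) ->
  forall s, 0 <= s <= L -> ip (H x) (U s y) = 0.
Proof.
move=> L0 Dx xy s sL.
have Re0 c : complex.Re (ip (- 'i *: H x) (c *: U s y)) = 0.
  apply: cvg_zeros_eq0 (cvg_Re_ipl ipP _) _; first exact: ug_generator.
  move=> d d0; have [k [k0 kd skL]] := small_shift_in_itv L0 sL d0.
  exists k; split=> //.
  rewrite (ipZl ipP) (ipBl ipP) ug_adj ugZ !(ipZr ipP) -ug_add [- k + s]addrC.
  by rewrite (xy _ skL) (xy _ sL) subrr mulr0.
have : ip (- 'i *: H x) (U s y) = 0.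
  apply: complex_eq0; first by have := Re0 1; rewrite scale1r.
  by have := Re0 'i; rewrite (ipZr ipP).
rewrite (ipZl ipP) => /eqP; rewrite mulf_eq0 => /orP[|/eqP //].
by move=> /eqP/(congr1 (@complex.Im R))/eqP; rewrite /= opprK oner_eq0.
Qed.

End UnitaryGroup.

Lemma ug_agree (R : realType) (V : lmodType R[i]) (ip : V -> V -> R[i])
    (D : V -> Prop) (H1 H2 : V -> V) (U1 U2 : R -> V -> V) (y : V) (t : R) :
  inner_product ip -> dense_in ip D ->
  unitary_group_of ip D H1 U1 -> unitary_group_of ip D H2 U2 -> 0 <= t ->
  (forall s a, 0 <= s <= t -> D a -> ip (H1 a - H2 a) (U2 s y) = 0) ->
  U1 t y = U2 t y.
Proof.
move=> ipP Ddense G1 G2 t0 orth.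
have key x : D x -> complex.Re (ip (U1 t x) (U2 t y)) = complex.Re (ip x y).
  move=> Dx; pose g s := complex.Re (ip (U1 s x) (U2 s y)).
  suff : g t = g 0 by rewrite /g (ug0 G1) (ug0 G2).
  apply: (derive0_eq t0) => s st.
  pose a := U1 s x; pose b := U2 s y; have Da : D a := ug_domain G1 s Dx.
  (* Isometry of U2: g (s + h) - g s = <(U1 h - U2 h) a | U2 h b>, so y need
     not lie in D. *)
  have -> : (fun h => h^-1 * (g (s + h) - g s)) =
    (fun h => complex.Re (ip ((h^-1)%:C *: (U1 h a - a)) (U2 h b)) -
              complex.Re (ip ((h^-1)%:C *: (U2 h a - a)) (U2 h b))).
    apply/funext => h; rewrite /g [s + h]addrC (ug_add G1) (ug_add G2).
    rewrite -(ug_iso G2 h (U1 s x)) -!raddfB -!(ipBl ipP) -scalerBr (ipZl ipP).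
    by rewrite conjc_realC /= Re_realM opprB addrA subrK.
  rewrite -[X in _ --> X](_ : complex.Re (ip (- 'i *: H1 a) b) -
                              complex.Re (ip (- 'i *: H2 a) b) = 0).
    apply: cvgB; apply: (cvg_Re_ip ipP); try exact: ug_cvg G2 b.
      exact: ug_generator G1 _ Da.
    exact: ug_generator G2 _ Da.
  by rewrite -raddfB -(ipBl ipP) -scalerBr (ipZl ipP) orth ?mulr0.
have : U1 (- t) (U2 t y) - y = 0.
  apply: (dense_Re_ip_eq0 ipP Ddense) => x Dx.
  by rewrite (ipBr ipP) raddfB /= -(ug_adj G1) key ?subrr.
by move/eqP; rewrite subr_eq0 => /eqP E; rewrite -{1}E -(ug_add G1) subrr (ug0 G1).
Qed.

Theorem proposition3 (R : realType) (V : lmodType R[i]) (ip : V -> V -> R[i])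
    (D : V -> Prop) (Hon : V -> V) (psi_off psi_on : V)
    (Uon Uhat : R -> V -> V) (L : R) :
  hilbert_space ip ->
  self_adjoint ip D Hon ->
  ip psi_off psi_off = 1 -> ip psi_on psi_on = 1 -> ip psi_off psi_on = 0 ->
  D psi_off ->
  ip psi_off (Hon psi_off) != 0 ->
  (* Uon t = e^{-i t Hon} *)
  unitary_group_of ip D Hon Uon ->
  (* Uhat t = e^{-i t Hhat}, Hhat = Hon - Hon|off><off|Hon / r0, domain D *)
  unitary_group_of ip D
    (fun x => Hon x - (ip psi_off (Hon x) / ip psi_off (Hon psi_off)) *: Hon psi_off)
    Uhat ->
  0 < L ->
  (forall t, 0 <= t <= L -> ip psi_off (Uon t psi_on) = 0) ->
  forall t, 0 <= t <= L ->
    Uhat t psi_off = psi_off /\ Uhat t psi_on = Uon t psi_on.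
Proof.
move=> [ipP _] [_ _ Ddense _] _ _ _ Doff r0 Gon Ghat L0 orth t /andP[t0 tL].
split.
  by apply: (ug_fix_kernel Ghat ipP Doff); rewrite divff // scale1r subrr.
apply: (ug_agree ipP Ddense Ghat Gon t0) => s a /andP[s0 st] Da /=.
rewrite addrAC subrr add0r -scaleNr (ipZl ipP).
by rewrite (ug_generator_orth Gon ipP L0 Doff orth) ?mulr0 // s0 (le_trans st tL).
Qed.
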